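(* Let $n\ge2$ and let $\mathcal{M}\subseteq\mathbb{R}^{n\times n}$ be path-connected. Suppose that for each $M\in\mathcal{M}$ both $M$ and $M^{[2]}$ are nonsingular, and that $\mathcal{M}$ contains a positive stable (resp. Hurwitz) matrix. Then every matrix in $\mathcal{M}$ is positive stable (resp. Hurwitz).
   Context: A real square matrix is positive stable if all its eigenvalues have positive real part, and Hurwitz if all its eigenvalues have negative real part. $\mathbb{R}^{n\times n}$ carries the Euclidean topology. For $M\in\mathbb{R}^{n\times n}$, $M^{[2]}$ is the second additive compound: the matrix of $u\wedge v\mapsto Mu\wedge v+u\wedge Mv$ on $\Lambda^2\mathbb{R}^n$ with respect to the basis $e_i\wedge e_j$ ($i<j$). *)

From HB Require Import structures.
From mathcomp Require Import all_boot all_order all_algebra.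
From mathcomp Require Import all_classical all_reals all_analysis.
From mathcomp Require Import complex.
Set Implicit Arguments. Unset Strict Implicit. Unset Printing Implicit Defensive.
Import Order.TTheory GRing.Theory Num.Theory numFieldNormedType.Exports.
Local Open Scope classical_set_scope.
Local Open Scope ring_scope.

Definition path_connected (R : realType) (n : nat) (S : set 'M[R]_n) : Prop :=
  forall A B : 'M[R]_n, S A -> S B ->
    exists g : R -> 'M[R]_n,
      {within `[0%R, 1%R], continuous g} /\ g 0 = A /\ g 1 = B /\
      (forall t : R, t \in `[0%R, 1%R] -> S (g t)).

Definition cmx (R : realType) (n : nat) (M : 'M[R]_n) : 'M[R[i]]_n :=
  map_mx (fun x : R => Complex x 0) M.

Definition positive_stable (R : realType) (n : nat) (M : 'M[R]_n) : Prop :=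
  forall z : R[i], eigenvalue (cmx M) z -> 0 < complex.Re z.

Definition hurwitz (R : realType) (n : nat) (M : 'M[R]_n) : Prop :=
  forall z : R[i], eigenvalue (cmx M) z -> complex.Re z < 0.

(* Index set of the basis e_i /\ e_j, i < j, of Lambda^2 R^n
   (enumerated lexicographically). *)
Definition wpairs (n : nat) := {p : 'I_n * 'I_n | (p.1 < p.2)%N}.

(* coefficient of e_i /\ e_j (i<j) in e_p /\ e_q *)
Definition wcoef {R : nzRingType} (n : nat) (p q : 'I_n) (ij : wpairs n) : R :=
  ((p == (val ij).1) && (q == (val ij).2))%:R
  - ((p == (val ij).2) && (q == (val ij).1))%:R.

(* entry (ij, kl) of M^[2]: coefficient of e_i/\e_j in
   M e_k /\ e_l + e_k /\ M e_l *)
Definition compound2_entry {R : nzRingType} (n : nat) (M : 'M[R]_n)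
    (ij kl : wpairs n) : R :=
  \sum_(p < n) M p (val kl).1 * wcoef p (val kl).2 ij
  + \sum_(q < n) M q (val kl).2 * wcoef (val kl).1 q ij.

Definition compound2 {R : nzRingType} (n : nat) (M : 'M[R]_n)
  : 'M[R]_(#|{: wpairs n}|) :=
  \matrix_(a, b) compound2_entry M (enum_val a) (enum_val b).

From HB Require Import structures.
From mathcomp Require Import all_boot all_order all_algebra.
From mathcomp Require Import all_classical all_reals all_analysis.
From mathcomp Require Import complex.
From mathcomp Require Import perm ring lra.
Set Implicit Arguments. Unset Strict Implicit. Unset Printing Implicit Defensive.
Import Order.TTheory GRing.Theory Num.Theory numFieldNormedType.Exports.
Local Open Scope classical_set_scope.
Local Open Scope ring_scope.

(** An eigenvalue of a continuously moving real matrix can only leave an open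
    half-plane [0 < s Re z] (with [s = 1] or [s = -1]) through the imaginary
    axis. A crossing at [0] is excluded by [det M <> 0]. A crossing at [i y]
    with [y <> 0] is excluded by [det M^[2] <> 0]: the conjugate [-i y] is then
    also an eigenvalue, and the wedge of the two eigenvectors is an eigenvector
    of [M^[2]] for [i y - i y = 0]. Along a path in the set, the parameters at
    which the matrix is stable thus form a subset of [[0,1]] containing [0]
    that is open, because the roots of [det (z - M)] depend continuously on
    [M], and closed, by the above; so it is all of [[0,1]]. *)

Section CharPoly.
Variable F : fieldType.

Lemma horner_char_poly n (A : 'M[F]_n) z : (char_poly A).[z] = \det (z%:M - A).
Proof.
rewrite /char_poly -horner_evalE -det_map_mx; congr (\det _).
apply/matrixP => i j; rewrite !mxE /horner_evalE /=.
by rewrite horner_evalE hornerD hornerN hornerMn hornerX hornerC.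
Qed.

Lemma eigenvalue_det_sub n (A : 'M[F]_n) z : eigenvalue A z -> \det (z%:M - A) = 0.
Proof. by rewrite eigenvalue_root_char /root horner_char_poly => /eqP. Qed.

End CharPoly.

Lemma det_sub_factor (F : closedFieldType) n (A : 'M[F]_n) : exists rs : seq F,
  [/\ size rs = n, (forall r, r \in rs -> eigenvalue A r) &
      forall z, \det (z%:M - A) = \prod_(r <- rs) (z - r)].
Proof.
have [rs Hrs] := closed_field_poly_normal (char_poly A).
rewrite (monicP (char_poly_monic A)) scale1r in Hrs.
exists rs; split.
- by have := size_char_poly A; rewrite Hrs size_prod_XsubC => -[].
- move=> r rin; rewrite eigenvalue_root_char /root Hrs horner_prod prodf_seq_eq0.
  by apply/hasP; exists r; rewrite // hornerXsubC subrr eqxx.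
- move=> z; rewrite -horner_char_poly Hrs horner_prod.
  by apply: eq_bigr => r _; rewrite hornerXsubC.
Qed.

Section Wedge.
Variables (F : fieldType) (n : nat).

Definition wedge_minor (v w : 'rV[F]_n) (p q : 'I_n) :=
  v ord0 p * w ord0 q - v ord0 q * w ord0 p.

Definition wedge (v w : 'rV[F]_n) : 'rV[F]_#|{: wpairs n}| :=
  \row_a wedge_minor v w (val (enum_val a)).1 (val (enum_val a)).2.

Lemma wedge_minorC v w p q : wedge_minor v w q p = - wedge_minor v w p q.
Proof. by rewrite /wedge_minor opprB. Qed.

Lemma sum_wpairs_indicator (Z : 'I_n -> 'I_n -> F) p q :
  \sum_(ij : wpairs n) Z (val ij).1 (val ij).2 *
     ((p == (val ij).1) && (q == (val ij).2))%:R = if (p < q)%N then Z p q else 0.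
Proof.
case: ltnP => h.
  rewrite (bigD1 (exist _ (p, q) h)) //= !eqxx mulr1 big1 ?addr0 // => -[[a b] hab] /= neq.
  case: (eqVneq p a) => [e1|]; case: (eqVneq q b) => [e2|] /=; rewrite ?mulr0 //.
  by move/negP: neq; case; apply/eqP/val_inj; rewrite /= e1 e2.
apply: big1 => -[[a b] hab] _ /=.
case: (eqVneq p a) => [e1|]; case: (eqVneq q b) => [e2|] /=; rewrite ?mulr0 //.
by move: hab; rewrite /= -e1 -e2 => /(leq_ltn_trans h); rewrite ltnn.
Qed.

Lemma sum_wedge_wcoef (v w : 'rV[F]_n) p q :
  \sum_(a < #|{: wpairs n}|)
     wedge_minor v w (val (enum_val a)).1 (val (enum_val a)).2 * wcoef p q (enum_val a)
  = wedge_minor v w p q.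
Proof.
pose G (ij : wpairs n) := wedge_minor v w (val ij).1 (val ij).2 * wcoef p q ij.
rewrite (eq_bigr (fun a => G (enum_val a))) //.
rewrite -big_enum_val /= /G /wcoef.
under eq_bigr do rewrite mulrBr.
rewrite sumrB sum_wpairs_indicator.
under eq_bigr do rewrite andbC.
rewrite sum_wpairs_indicator.
case: ltngtP => h.
- by rewrite subr0.
- by rewrite sub0r wedge_minorC opprK.
- by move/val_inj: h => ->; rewrite /wedge_minor !subrr.
Qed.

Lemma sum_mul_wedge_minor (A : 'M[F]_n) (v w : 'rV[F]_n) a b c d :
  v *m A = a *: v -> w *m A = b *: w ->
  \sum_p A p c * wedge_minor v w p d = w ord0 d * (a * v ord0 c) - v ord0 d * (b * w ord0 c).
Proof.
have entry (u : 'rV[F]_n) e : u *m A = e *: u -> \sum_p u ord0 p * A p c = e * u ord0 c.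
  by move=> h; have := congr1 (fun M : 'rV[F]_n => M ord0 c) h; rewrite !mxE.
move=> /entry <- /entry <-; rewrite !mulr_sumr -sumrB.
by apply: eq_bigr => p _; rewrite /wedge_minor; ring.
Qed.

Lemma wedge_eigen (A : 'M[F]_n) (v w : 'rV[F]_n) a b :
  v *m A = a *: v -> w *m A = b *: w -> wedge v w *m compound2 A = (a + b) *: wedge v w.
Proof.
move=> hv hw; apply/rowP => k; rewrite !mxE.
under eq_bigr do rewrite !mxE /compound2_entry mulrDr !mulr_sumr.
rewrite big_split /= exchange_big /= [X in _ + X]exchange_big /=.
under eq_bigr do (under eq_bigr do rewrite mulrCA; rewrite -mulr_sumr sum_wedge_wcoef).
under [X in _ + X]eq_bigr do
  (under eq_bigr do rewrite mulrCA; rewrite -mulr_sumr sum_wedge_wcoef wedge_minorC mulrN).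
rewrite sumrN !(sum_mul_wedge_minor _ _ hv hw) /wedge_minor; ring.
Qed.

Lemma wedge_eq0 (v w : 'rV[F]_n) : wedge v w = 0 -> forall p q, wedge_minor v w p q = 0.
Proof.
move=> vw0 p q; case: (ltngtP p q) => h.
- have := congr1 (fun M : 'rV[F]_#|{: wpairs n}| => M ord0 (enum_rank (exist _ (p, q) h : wpairs n))) vw0.
  by rewrite !mxE enum_rankK.
- have := congr1 (fun M : 'rV[F]_#|{: wpairs n}| => M ord0 (enum_rank (exist _ (q, p) h : wpairs n))) vw0.
  by rewrite !mxE enum_rankK /= wedge_minorC => /eqP; rewrite oppr_eq0 => /eqP.
- by move/val_inj: h => ->; rewrite /wedge_minor subrr.
Qed.

(* Eigenvectors for distinct eigenvalues are not proportional. *)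
Lemma wedge_eigen_neq0 (A : 'M[F]_n) (v w : 'rV[F]_n) a b :
  v *m A = a *: v -> w *m A = b *: w -> v != 0 -> w != 0 -> a != b -> wedge v w != 0.
Proof.
move=> hv hw vn0 wn0 ab; apply/eqP => /wedge_eq0 minor0.
have [p vp] : exists p, v ord0 p != 0.
  apply/existsP; move: vn0; apply: contraR; rewrite negb_exists => /forallP h.
  by apply/eqP/rowP => j; rewrite mxE; move: (h j); rewrite negbK => /eqP.
have wv : w = (w ord0 p / v ord0 p) *: v.
  apply/rowP => j; rewrite !mxE; apply: (mulfI vp).
  have /eqP := minor0 p j; rewrite subr_eq0 => /eqP e.
  by rewrite mulrA mulrCA divff // mulr1 e mulrC.
move: hw; rewrite {1}wv -scalemxAl hv scalerA mulrC -scalerA -wv => /eqP.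
rewrite -subr_eq0 -scalerBl scaler_eq0 subr_eq0 (negbTE wn0) orbF => /eqP ba.
by rewrite ba eqxx in ab.
Qed.

End Wedge.

Lemma compound2_map (R1 R2 : nzRingType) (f : {rmorphism R1 -> R2}) n (M : 'M[R1]_n) :
  compound2 (map_mx f M) = map_mx f (compound2 M).
Proof.
apply/matrixP => a b; rewrite !mxE /compound2_entry rmorphD !rmorph_sum.
by congr (_ + _); apply: eq_bigr => p _; rewrite !mxE rmorphM /wcoef rmorphB !rmorph_nat.
Qed.

Lemma eigenvalue_cmx_Re_neq0 (R : realType) n (M : 'M[R]_n) (z : R[i]) :
  M \in unitmx -> compound2 M \in unitmx -> eigenvalue (cmx M) z -> complex.Re z != 0.
Proof.
move=> Mu Cu /eigenvalueP [v hv vn0].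
have unit_ker m (B : 'M[R[i]]_m) (u : 'rV_m) : B \in unitmx -> u *m B = 0 -> u = 0.
  by move=> Bu uB; rewrite -(mulmxK Bu u) uB mul0mx.
have cmxE : cmx M = map_mx (real_complex R) M by [].
apply/negP => /eqP rez.
have [z0|zn0] := eqVneq z 0.
  move: vn0; rewrite (unit_ker _ (cmx M) v) ?eqxx //; first by rewrite cmxE map_unitmx.
  by rewrite hv z0 scale0r.
pose w := map_mx conjc v.
have hw : w *m cmx M = conjc z *: w.
  have cM : map_mx conjc (cmx M) = cmx M by apply/matrixP => i j; rewrite !mxE /= oppr0.
  by rewrite /w -cM -map_mxM hv map_mxZ.
have wn0 : w != 0 by rewrite map_mx_eq0.
have zJ : z != conjc z.
  move: rez zn0; case: z {hv hw} => x y /= -> zn0.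
  apply/negP => /eqP [] /eqP; rewrite -addr_eq0 -mulr2n mulrn_eq0 /= => /eqP y0.
  by move: zn0; rewrite y0 => /negP; apply; apply/eqP.
have := wedge_eigen hv hw; rewrite addcJ rez mulr0 scale0r.
move/unit_ker; rewrite cmxE compound2_map map_unitmx => /(_ Cu) /eqP.
by apply/negP; apply: wedge_eigen_neq0 hv hw vn0 wn0 zJ.
Qed.

Section PerturbationBounds.
Variable C : numDomainType.

Lemma norm_prod_sub_le n (a b : 'I_n -> C) (K d : C) : 1 <= K -> 0 <= d ->
  (forall i, `|a i| <= K) -> (forall i, `|b i| <= K) -> (forall i, `|a i - b i| <= d) ->
  `|\prod_i a i - \prod_i b i| <= n%:R * K ^+ n * d.
Proof.
move=> K1 d0; have K0 : 0 <= K by apply: le_trans K1.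
elim: n a b => [|n IH] a b ha hb hab.
  by rewrite !big_ord0 subrr normr0 !mul0r.
rewrite !big_ord_recr /=.
set A := \prod_(i < n) _; set B := \prod_(i < n) _.
have hAB : `|A - B| <= n%:R * K ^+ n * d by apply: IH.
have hB : `|B| <= K ^+ n.
  rewrite -[n in K ^+ n]card_ord -prodr_const normr_prod.
  by apply: ler_prod => i _; rewrite normr_ge0 hb.
have -> : A * a ord_max - B * b ord_max =
          (A - B) * a ord_max + B * (a ord_max - b ord_max) by ring.
apply: le_trans (ler_normD _ _) _; rewrite !normrM.
have h1 : `|A - B| * `|a ord_max| <= n%:R * K ^+ n * d * K.
  by apply: ler_pM => //; rewrite normr_ge0.
have h2 : `|B| * `|a ord_max - b ord_max| <= K ^+ n * d.
  by apply: ler_pM => //; rewrite normr_ge0.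
have h3 : K ^+ n * d <= K ^+ n.+1 * d.
  by rewrite ler_wpM2r // exprS ler_peMl // exprn_ge0.
apply: le_trans (lerD h1 (le_trans h2 h3)) _.
by rewrite le_eqVlt; apply/orP; left; apply/eqP; rewrite !exprS mulrSr; ring.
Qed.

Lemma norm_det_sub_le n (P Q : 'M[C]_n) (K d : C) : 1 <= K -> 0 <= d ->
  (forall i j, `|P i j| <= K) -> (forall i j, `|Q i j| <= K) ->
  (forall i j, `|P i j - Q i j| <= d) ->
  `|\det P - \det Q| <= n`!%:R * (n%:R * K ^+ n * d).
Proof.
move=> K1 d0 hP hQ hPQ; rewrite /determinant -sumrB.
apply: le_trans (ler_norm_sum _ _ _) _.
apply: le_trans (_ : \sum_(s : {perm 'I_n}) (n%:R * K ^+ n * d) <= _).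
  apply: ler_sum => s _; rewrite -mulrBr normrM normr_sign mul1r.
  by apply: norm_prod_sub_le => // i; rewrite ?hP ?hQ ?hPQ.
by rewrite sumr_const card_Sn [X in _ <= X]mulr_natl.
Qed.

End PerturbationBounds.

Lemma eigenvalue_norm_le (F : numFieldType) n (A : 'M[F]_n) z a :
  eigenvalue A z -> (forall i j, `|A i j| <= a) -> `|z| <= n%:R * a.
Proof.
move=> /eigenvalueP [v hv vn0] ha.
pose N := \sum_j `|v ord0 j|.
have N0 : 0 < N.
  rewrite lt0r sumr_ge0 ?andbT => [|j _]; last by rewrite normr_ge0.
  move: vn0; apply: contraNN; rewrite psumr_eq0 => [/allP h|j _]; last by rewrite normr_ge0.
  apply/eqP/rowP => j; rewrite mxE; apply/eqP; rewrite -normr_eq0.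
  by apply: h; rewrite mem_index_enum.
rewrite -(ler_pM2r N0) /N mulr_sumr.
apply: le_trans (_ : \sum_j \sum_i `|v ord0 i| * a <= _).
  apply: ler_sum => j _; rewrite -normrM.
  have -> : z * v ord0 j = \sum_i v ord0 i * A i j.
    by have := congr1 (fun M : 'rV[F]_n => M ord0 j) hv; rewrite !mxE => <-.
  apply: le_trans (ler_norm_sum _ _ _) _.
  by apply: ler_sum => i _; rewrite normrM ler_wpM2l ?normr_ge0.
rewrite exchange_big /= mulr_sumr; apply: ler_sum => i _.
by rewrite sumr_const card_ord -mulr_natr le_eqVlt; apply/orP; left; apply/eqP; ring.
Qed.

Section ComplexBounds.
Variable R : realType.
Local Open Scope complex_scope.

Lemma norm_real_complex (x : R) : `|x%:C| = `|x|%:C :> R[i].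
Proof. by rewrite normc_def /= expr0n /= addr0 sqrtr_sqr. Qed.

Lemma signed_Re_sub_le_norm (s : R) (z r : R[i]) : `|s| = 1 ->
  (s * complex.Re r - s * complex.Re z)%:C <= `|z - r|.
Proof.
move=> hs; apply: le_trans (normc_ge_Re _); rewrite lecR.
have -> : complex.Re (z - r) = complex.Re z - complex.Re r by case: z; case: r.
rewrite -mulrBr; apply: le_trans (ler_norm _) _.
by rewrite normrM hs mul1r distrC.
Qed.

Lemma prod_le_norm_prod (rs : seq R[i]) (z : R[i]) (g : R[i] -> R) :
  (forall r, r \in rs -> 0 <= g r /\ (g r)%:C <= `|z - r|) ->
  (\prod_(r <- rs) g r)%:C <= `|\prod_(r <- rs) (z - r)|.
Proof.
move=> h; rewrite rmorph_prod normr_prod big_seq [X in _ <= X]big_seq.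
by apply: ler_prod => r /h [g0 gl]; rewrite ler0c g0 gl.
Qed.

End ComplexBounds.

Lemma within_continuous_entries (R : realType) n (f : R -> 'M[R]_n) t0 (e : R) :
  {within `[0%R, 1%R], continuous f} -> t0 \in `[0%R, 1%R] -> 0 < e ->
  exists2 d : R, 0 < d & forall t, t \in `[0%R, 1%R] -> `|t0 - t| < d ->
    forall i j, `|f t0 i j - f t i j| < e.
Proof.
move=> fc t0in e0.
have := (@subspace_continuousP R `[0%R, 1%R]%classic _ f).1 fc t0 t0in.
move/cvg_ball => /(_ e e0) /nbhs_ballP [d d0 hd].
by exists d => // t tin dt i j; have [_] := hd t dt tin; apply.
Qed.

Lemma unit_interval_induction (R : realType) (P : R -> Prop) : P 0 ->
  (forall t0, t0 \in `[0%R, 1%R] -> P t0 ->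
     exists2 d : R, 0 < d & forall t, t \in `[0%R, 1%R] -> `|t0 - t| < d -> P t) ->
  (forall t0, t0 \in `[0%R, 1%R] ->
     (forall d : R, 0 < d -> exists2 t, t \in `[0%R, 1%R] /\ `|t0 - t| < d & P t) -> P t0) ->
  P 1.
Proof.
move=> P0 Popen Pclosed.
have in01 (x : R) : (x \in `[0%R, 1%R]) = (0 <= x) && (x <= 1) by rewrite in_itv.
pose E := [set t : R | t \in `[0%R, 1%R] /\ forall u, u \in `[0%R, 1%R] -> u <= t -> P u].
have E0 : E 0.
  split=> [|u]; first by rewrite in01 lexx ler01.
  rewrite in01 => /andP [u0 _] u0'.
  by have -> : u = 0 by apply/eqP; rewrite eq_le u0 u0'.
have hsE : has_sup E by split; [exists 0 | exists 1 => t [+ _]; rewrite in01 => /andP []].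
set c := sup E.
have c0 : 0 <= c by apply: sup_upper_bound.
have c1 : c <= 1 by apply: ge_sup => [|t [+ _]]; [exists 0 | rewrite in01 => /andP []].
have cin : c \in `[0%R, 1%R] by rewrite in01 c0 c1.
have Pc : P c.
  apply: Pclosed => // d d0.
  have [t [tin tall]] := sup_adherent d0 hsE; rewrite -/c => ct.
  exists t; last exact: tall.
  have tc : t <= c := sup_upper_bound hsE (conj tin tall).
  by split => //; rewrite ger0_norm; lra.
have [d d0 hd] := Popen c cin Pc.
have [t [tin tall]] := sup_adherent d0 hsE; rewrite -/c => ct.
pose t1 := Num.min 1 (c + d / 2).
have t1in : t1 \in `[0%R, 1%R] by rewrite in01 /t1 ge_min lexx /= le_min ler01 /=; lra.
have Et1 : E t1.
  split=> // u uin ut1.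
  have [uc|uc] := lerP u (c - d); first by apply: tall => //; lra.
  have : u <= c + d / 2 by apply: le_trans ut1 _; rewrite /t1 ge_min lexx orbT.
  by move=> h; apply: hd => //; rewrite ltr_norml; apply/andP; split; lra.
have : t1 <= c := sup_upper_bound hsE Et1.
rewrite /t1 ge_min => /orP [h1|h2]; last lra.
by have -> : 1 = c by apply/eqP; rewrite eq_le h1 c1.
Qed.

Definition sign_stable (R : realType) n (s : R) (M : 'M[R]_n) :=
  forall z : R[i], eigenvalue (cmx M) z -> 0 < s * complex.Re z.

Section StabilityAlongPath.
Variables (R : realType) (n : nat) (s : R).
Hypothesis hs : `|s| = 1.
Variable f : R -> 'M[R]_n.
Hypothesis fc : {within `[0%R, 1%R], continuous f}.
Local Open Scope complex_scope.

Definition det_shift t (z : R[i]) := \det (z%:M - cmx (f t)).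
Definition entry_norm_sum t0 := \sum_(ij : 'I_n * 'I_n) `|f t0 ij.1 ij.2|.

Lemma entry_norm_sum_ge0 t0 : 0 <= entry_norm_sum t0.
Proof. by apply: sumr_ge0 => ij _; rewrite normr_ge0. Qed.

Lemma norm_entry_le_sum t0 i j : `|f t0 i j| <= entry_norm_sum t0.
Proof.
rewrite /entry_norm_sum (bigD1 (i, j)) //= lerDl.
by apply: sumr_ge0 => ij _; rewrite normr_ge0.
Qed.

Lemma norm_shift_entry_le t (w : R[i]) (B M' : R) i j : `|w| <= B%:C ->
  `|f t i j| <= M' -> `|(w%:M - cmx (f t)) i j| <= (B + M')%:C.
Proof.
move=> hw hf; rewrite !mxE complexr0 rmorphD.
apply: le_trans (ler_normB _ _) _; apply: lerD; last by rewrite norm_real_complex lecR.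
by case: (i == j); rewrite ?mulr1n ?mulr0n ?normr0 // (le_trans _ hw) ?normr_ge0.
Qed.

Lemma det_shift_near t0 (B eta : R) : t0 \in `[0%R, 1%R] -> 0 <= B -> 0 < eta ->
  exists2 d : R, 0 < d & forall t, t \in `[0%R, 1%R] -> `|t0 - t| < d ->
   (forall i j, `|f t i j| <= entry_norm_sum t0 + 1) /\
   (forall w : R[i], `|w| <= B%:C -> `|det_shift t w - det_shift t0 w| < eta%:C).
Proof.
move=> t0in B0 eta0.
set K := B + (entry_norm_sum t0 + 1).
have K1 : 1 <= K by have := entry_norm_sum_ge0 t0; rewrite /K; lra.
set cst := n`!%:R * (n%:R * K ^+ n).
have cst0 : 0 <= cst by rewrite /cst !mulr_ge0 ?exprn_ge0 ?ler0n //; lra.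
set e := Num.min 1 (eta / (cst + 1)).
have e0 : 0 < e by rewrite /e lt_min ltr01 /= divr_gt0 //; lra.
have e1 : e <= 1 by rewrite /e ge_min lexx.
have e2 : e * (cst + 1) <= eta by rewrite -ler_pdivlMr ?ge_min ?lexx ?orbT //; lra.
have [d d0 hd] := within_continuous_entries fc t0in e0.
exists d => // t tin dt; have hdt := hd t tin dt.
have ent i j : `|f t i j| <= entry_norm_sum t0 + 1.
  have h1 := hdt i j; have h2 := norm_entry_le_sum t0 i j.
  have h3 := ler_normD (f t0 i j) (f t i j - f t0 i j).
  rewrite addrC subrK distrC in h3 h1; lra.
split=> // w hw.
apply: le_lt_trans (@norm_det_sub_le _ n _ _ K%:C e%:C _ _ _ _ _) _.
- by rewrite -(rmorph1 (real_complex R)) lecR.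
- by rewrite ler0c ltW.
- by move=> i j; apply: norm_shift_entry_le.
- move=> i j; apply: norm_shift_entry_le => //.
  by apply: le_trans (norm_entry_le_sum _ _ _) _; lra.
- move=> i j; rewrite !mxE !complexr0.
  rewrite (_ : _ - _ = (f t0 i j - f t i j)%:C); last by rewrite rmorphB; ring.
  by rewrite norm_real_complex lecR ltW.
rewrite -!(rmorph_nat (real_complex R)) -rmorphXn -!rmorphM ltcR.
have -> : n`!%:R * (n%:R * K ^+ n * e) = cst * e by rewrite /cst; ring.
nra.
Qed.

(* Near a stable [f t0], [|det (z - f t)|] stays close to
   [|det (z - f t0)| >= prod_r s Re r > 0] on the closed half-plane [s Re z <= 0]. *)
Lemma sign_stable_near t0 : t0 \in `[0%R, 1%R] -> sign_stable s (f t0) ->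
  exists2 d : R, 0 < d & forall t, t \in `[0%R, 1%R] -> `|t0 - t| < d ->
    sign_stable s (f t).
Proof.
move=> t0in st0.
have [rs [_ rsE hD]] := det_sub_factor (cmx (f t0)).
set m0 := \prod_(r <- rs) (s * complex.Re r).
have m0p : 0 < m0 by rewrite /m0 big_seq; apply: prodr_gt0 => r /rsE /st0.
set B := n%:R * (entry_norm_sum t0 + 1).
have B0 : 0 <= B by rewrite /B mulr_ge0 ?ler0n //; have := entry_norm_sum_ge0 t0; lra.
have [d d0 hd] := det_shift_near t0in B0 m0p.
exists d; first exact: d0.
move=> t tin dt z ez.
have [ent hdiff] := hd t tin dt.
rewrite ltNge; apply/negP => zle.
have zB : `|z| <= B%:C.
  rewrite /B rmorphM rmorph_nat; apply: eigenvalue_norm_le ez _ => i j.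
  by rewrite mxE complexr0 norm_real_complex lecR.
have low : m0%:C <= `|\prod_(r <- rs) (z - r)|.
  apply: le_trans (prod_le_norm_prod
    (g := fun r => s * complex.Re r - s * complex.Re z) _).
    rewrite lecR /m0 big_seq [X in _ <= X]big_seq.
    by apply: ler_prod => r /rsE /st0 h; apply/andP; split; lra.
  move=> r /rsE /st0 h; split; first lra.
  exact: signed_Re_sub_le_norm.
have := hdiff z zB; rewrite /det_shift (eigenvalue_det_sub ez) sub0r normrN hD.
by move/lt_le_trans => /(_ _ low); rewrite ltxx.
Qed.

(* The limit of stable [f t] cannot have an eigenvalue with [s Re z < 0]:
   [|det (z - f t)| >= (-s Re z)^n] for stable [f t]. *)
Lemma sign_stable_closed t0 : t0 \in `[0%R, 1%R] ->
  f t0 \in unitmx -> compound2 (f t0) \in unitmx ->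
  (forall d : R, 0 < d -> exists2 t, t \in `[0%R, 1%R] /\ `|t0 - t| < d & sign_stable s (f t)) ->
  sign_stable s (f t0).
Proof.
move=> t0in Mu Cu hnear z ez.
have rz := eigenvalue_cmx_Re_neq0 Mu Cu ez.
rewrite ltNge; apply/negP => zle.
have sn0 : s != 0 by rewrite -normr_eq0 hs oner_eq0.
have zlt : s * complex.Re z < 0 by rewrite lt_neqAle zle mulf_neq0.
set e := - (s * complex.Re z).
have e0 : 0 < e by rewrite /e oppr_gt0.
set B := complex.Re `|z|.
have zB : `|z| <= B%:C by rewrite le_eqVlt [X in _ == X]normc_def /B normc_def eqxx.
have B0 : 0 <= B by rewrite /B normc_def /= sqrtr_ge0.
have [d d0 hd] := det_shift_near t0in B0 (exprn_gt0 n e0).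
have [t [tin dt] stt] := hnear d d0.
have [_ hdiff] := hd t tin dt.
have [rs [srs rsE hD]] := det_sub_factor (cmx (f t)).
have low : (e ^+ n)%:C <= `|\prod_(r <- rs) (z - r)|.
  have prod_e : \prod_(r <- rs) e = e ^+ size rs.
    by elim: (rs) => [|r rs' IH]; rewrite ?big_nil ?big_cons ?IH ?exprS.
  rewrite -srs -prod_e.
  apply: prod_le_norm_prod => r /rsE /stt h; split; first lra.
  by apply: le_trans (signed_Re_sub_le_norm _ _ hs); rewrite lecR /e; lra.
have := hdiff z zB; rewrite /det_shift (eigenvalue_det_sub ez) subr0 hD.
by move/lt_le_trans => /(_ _ low); rewrite ltxx.
Qed.

End StabilityAlongPath.

Lemma sign_stable_path_connected (R : realType) n (S : set 'M[R]_n) (s : R) :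
  `|s| = 1 -> path_connected S ->
  (forall M, S M -> M \in unitmx /\ compound2 M \in unitmx) ->
  forall M0 M, S M0 -> S M -> sign_stable s M0 -> sign_stable s M.
Proof.
move=> hs pc hS M0 M SM0 SM st0.
have [f [fc [f0 [f1 fin]]]] := pc M0 M SM0 SM.
rewrite -f1; apply: (unit_interval_induction (P := fun t => sign_stable s (f t))).
- by rewrite f0.
- exact: sign_stable_near.
- by move=> t0 t0in; have [] := hS _ (fin t0 t0in); apply: sign_stable_closed.
Qed.

Lemma positive_stableE (R : realType) n (M : 'M[R]_n) :
  positive_stable M <-> sign_stable 1 M.
Proof. by split=> h z /h; rewrite mul1r. Qed.

Lemma hurwitzE (R : realType) n (M : 'M[R]_n) : hurwitz M <-> sign_stable (-1) M.
Proof. by split=> h z /h; rewrite mulN1r oppr_gt0. Qed.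

Theorem lemma2p6 (R : realType) (n : nat) (S : set 'M[R]_n) :
  (2 <= n)%N ->
  path_connected S ->
  (forall M : 'M[R]_n, S M -> M \in unitmx /\ compound2 M \in unitmx) ->
  ((exists M : 'M[R]_n, S M /\ positive_stable M) ->
     forall M : 'M[R]_n, S M -> positive_stable M) /\
  ((exists M : 'M[R]_n, S M /\ hurwitz M) ->
     forall M : 'M[R]_n, S M -> hurwitz M).
Proof.
move=> _ pc hS; split=> -[M0 [SM0 st0]] M SM.
- apply/positive_stableE; apply: (sign_stable_path_connected (normr1 R) pc hS SM0 SM).
  exact/positive_stableE.
- apply/hurwitzE; apply: (sign_stable_path_connected (normrN1 R) pc hS SM0 SM).
  exact/hurwitzE.
Qed.
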